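(* Let $n$ be even and $f,g:\mathbb{F}_2^n\to\mathbb{F}_2$ bent functions with $g(\mathbf{x})=f(\mathbf{x}\oplus\mathbf{b})\oplus\mathbf{c}\cdot\mathbf{x}\oplus d$ for all $\mathbf{x}$, where $\mathbf{b},\mathbf{c}\in\mathbb{F}_2^n$, $d\in\mathbb{F}_2$. Let $\tilde f$ be the dual of $f$. Starting from $\ket{0^n}$ and applying in order $\mathrm{H}^{\otimes n}$, $U_g$, $\mathrm{H}^{\otimes n}$, $U_{\tilde f}$, $\mathrm{H}^{\otimes n}$, the state before measurement is $$(-1)^{\mathbf{b}\cdot\mathbf{c}\oplus d}\,2^{-n}\sum_{\mathbf{y},\mathbf{z}\in\mathbb{F}_2^n}(-1)^{\tilde f(\mathbf{y}\oplus\mathbf{c})\oplus\tilde f(\mathbf{y})\oplus\mathbf{y}\cdot(\mathbf{z}\oplus\mathbf{b})}\ket{\mathbf{z}},$$ and the probability of observing $\mathbf{z}\in\mathbb{F}_2^n$ upon measurement is $2^{-2n}\left|\sum_{\mathbf{y}\in\mathbb{F}_2^n}(-1)^{\tilde f(\mathbf{y}\oplus\mathbf{c})\oplus\tilde f(\mathbf{y})\oplus\mathbf{y}\cdot(\mathbf{z}\oplus\mathbf{b})}\right|^2$.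
   Context: $\mathbf{x}\cdot\mathbf{y}=\bigoplus_ix_iy_i$. Walsh–Hadamard transform: $W_f(\boldsymbol{\omega})=2^{-n/2}\sum_{\mathbf{x}}(-1)^{f(\mathbf{x})\oplus\mathbf{x}\cdot\boldsymbol{\omega}}$. $f$ is bent if $W_f(\boldsymbol{\omega})=\pm1$ for all $\boldsymbol{\omega}$; its dual $\tilde f$ is the Boolean function with $(-1)^{\tilde f(\mathbf{x})}=W_f(\mathbf{x})$. $\mathrm{H}$ is the Hadamard gate and $U_h$ the phase oracle $\ket{\mathbf{x}}\mapsto(-1)^{h(\mathbf{x})}\ket{\mathbf{x}}$. *)

(* Amplitudes live in an arbitrary numClosedFieldType C
   (e.g. algC, or complex numbers). *)
From mathcomp Require Import all_boot all_order all_algebra.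
Set Implicit Arguments. Unset Strict Implicit. Unset Printing Implicit Defensive.
Import Order.TTheory GRing.Theory Num.Theory.
Local Open Scope ring_scope.

Definition bvec (n : nat) := {ffun 'I_n -> bool}.
Definition xorv n (x y : bvec n) : bvec n := [ffun i => x i (+) y i].
Definition zerov n : bvec n := [ffun _ => false].
Definition dotv n (x y : bvec n) : bool := \big[addb/false]_(i < n) (x i && y i).

Section Q.
Variable C : numClosedFieldType.
Definition sgn (b : bool) : C := (-1) ^+ b.
Definition isq2n (n : nat) : C := (sqrtC 2)^-1 ^+ n.

Definition walsh n (f : bvec n -> bool) (w : bvec n) : C :=
  isq2n n * \sum_(x : bvec n) sgn (f x (+) dotv x w).
Definition bent n (f : bvec n -> bool) : Prop :=
  forall w, walsh f w = 1 \/ walsh f w = -1.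
Definition is_dual n (f ft : bvec n -> bool) : Prop :=
  forall x, sgn (ft x) = walsh f x.

Definition state n := bvec n -> C.
Definition ket0 n : state n := fun z => (z == zerov n)%:R.
Definition hadamard_n n (psi : state n) : state n :=
  fun z => isq2n n * \sum_(x : bvec n) sgn (dotv x z) * psi x.
Definition phase_oracle n (h : bvec n -> bool) (psi : state n) : state n :=
  fun x => sgn (h x) * psi x.
Definition prob n (psi : state n) (z : bvec n) : C := `|psi z| ^+ 2.
End Q.

(** The first two layers turn |0^n> into 2^{-n/2} W_g, and the shift rule for
    the Walsh transform rewrites W_g(w) as the sign (-1)^{b.c + d + w.b} times
    W_f(w + c) = (-1)^{ft(w + c)}.  The last two layers then just sum these
    signs against (-1)^{ft(w) + w.z}. *)
From mathcomp Require Import all_boot all_order all_algebra.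
From mathcomp Require Import ring.
Set Implicit Arguments. Unset Strict Implicit. Unset Printing Implicit Defensive.
Import Order.TTheory GRing.Theory Num.Theory.
Local Open Scope ring_scope.

Section Signs.
Variable C : numClosedFieldType.

Lemma sgn_addb (a b : bool) : sgn C (a (+) b) = sgn C a * sgn C b.
Proof. exact: signr_addb. Qed.

Lemma normr_sgn (b : bool) : `|sgn C b| = 1.
Proof. by rewrite /sgn normrX normrN1 expr1n. Qed.

Lemma isq2n_sqr n : isq2n C n ^+ 2 = 2 ^- n.
Proof. by rewrite /isq2n -exprM mulnC exprM exprVn sqrtCK exprVn. Qed.

End Signs.

Section Vectors.
Variable n : nat.
Implicit Types x y z : bvec n.

Lemma dotvC x y : dotv x y = dotv y x.
Proof. by apply: eq_bigr => i _; rewrite andbC. Qed.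

Lemma dotv_xorl x y z : dotv (xorv x y) z = dotv x z (+) dotv y z.
Proof.
rewrite /dotv -big_split /=; apply: eq_bigr => i _; rewrite ffunE.
by case: (x i); case: (y i); case: (z i).
Qed.

Lemma dotv_xorr x y z : dotv z (xorv x y) = dotv z x (+) dotv z y.
Proof. by rewrite dotvC dotv_xorl !(dotvC z). Qed.

Lemma dot0v z : dotv (zerov n) z = false.
Proof. by rewrite /dotv big1 // => i _; rewrite ffunE. Qed.

Lemma xorvK y : involutive (fun x => xorv x y).
Proof. by move=> x; apply/ffunP => i; rewrite !ffunE addbK. Qed.

End Vectors.

Section Circuit.
Variables (C : numClosedFieldType) (n : nat).

Lemma hadamard_n_ket0 w : hadamard_n (@ket0 C n) w = isq2n C n.
Proof.
rewrite /hadamard_n (bigD1 (zerov n)) //= /ket0 eqxx dot0v mulr1.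
by rewrite big1 ?addr0 ?mulr1 // => x /negbTE ->; rewrite mulr0.
Qed.

Lemma hadamard_phase_ket0 (h : bvec n -> bool) w :
  hadamard_n (phase_oracle h (hadamard_n (@ket0 C n))) w = isq2n C n * walsh C h w.
Proof.
rewrite /walsh {1}/hadamard_n /phase_oracle; congr (_ * _).
rewrite mulr_sumr; apply: eq_bigr => x _.
by rewrite hadamard_n_ket0 sgn_addb dotvC; ring.
Qed.

Lemma walsh_translate (f g : bvec n -> bool) (b c : bvec n) (d : bool) w :
  (forall x, g x = f (xorv x b) (+) dotv c x (+) d) ->
  walsh C g w = sgn C (dotv b c (+) d) * sgn C (dotv w b) * walsh C f (xorv w c).
Proof.
move=> hg; rewrite /walsh (reindex_inj (inv_inj (xorvK b))) /= !mulr_sumr.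
apply: eq_bigr => x _.
rewrite hg xorvK !dotv_xorr !dotv_xorl !sgn_addb (dotvC b c) (dotvC c x) (dotvC b w).
by rewrite /sgn; ring.
Qed.

End Circuit.

Theorem theorem11 (C : numClosedFieldType) (n : nat) (neven : ~~ odd n)
  (f g ft : bvec n -> bool) (b c : bvec n) (d : bool)
  (bf : bent C f) (bg : bent C g)
  (hg : forall x, g x = f (xorv x b) (+) dotv c x (+) d)
  (hft : is_dual C f ft) :
  let psi := hadamard_n (phase_oracle ft (hadamard_n (phase_oracle g
               (hadamard_n (@ket0 C n))))) in
  (forall z, psi z =
     sgn C (dotv b c (+) d) * 2 ^- n *
       \sum_(y : bvec n) sgn C (ft (xorv y c) (+) ft y (+) dotv y (xorv z b)))
  /\
  (forall z, prob psi z =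
     2 ^- (2 * n) *
       `|\sum_(y : bvec n) sgn C (ft (xorv y c) (+) ft y (+) dotv y (xorv z b))| ^+ 2).
Proof.
move=> psi.
have psiE z : psi z = sgn C (dotv b c (+) d) * 2 ^- n *
    \sum_(y : bvec n) sgn C (ft (xorv y c) (+) ft y (+) dotv y (xorv z b)).
  rewrite -isq2n_sqr /psi /hadamard_n /phase_oracle !mulr_sumr.
  apply: eq_bigr => w _.
  rewrite -/(hadamard_n _ w) hadamard_phase_ket0 (walsh_translate _ _ hg) -hft.
  by rewrite dotv_xorr (dotvC w z) !sgn_addb; ring.
split=> // z.
rewrite /prob psiE !normrM normr_sgn mul1r exprMn.
by rewrite ger0_norm ?invr_ge0 ?exprn_ge0 ?ler0n // -exprVn -exprM mulnC exprVn.
Qed.
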